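(* Let $\mathbb{X},\mathbb{Y}$ be real normed linear spaces and let $T\in\mathbb{B}(\mathbb{X},\mathbb{Y})$ be a smooth point of $\mathbb{B}(\mathbb{X},\mathbb{Y})$ with $M_T\neq\emptyset$. Then: (i) $M_T=\{\pm x_0\}$ for some $x_0\in S_{\mathbb{X}}$; (ii) $Tx_0$ is a smooth point of $\mathbb{Y}$; (iii) for every norming sequence $\{x_n\}$ for $T$, $x_0\in\overline{\operatorname{span}\{x_n:n\in\mathbb{N}\}}$.
   Context: All spaces are real; $\mathbb{B}(\mathbb{X},\mathbb{Y})$ has the operator norm; $S_{\mathbb{X}}$ is the unit sphere; $M_T=\{x\in S_{\mathbb{X}}:\|Tx\|=\|T\|\}$. A norming sequence for $T$ is $\{x_n\}\subseteq S_{\mathbb{X}}$ with $\|Tx_n\|\to\|T\|$. A nonzero element $x$ of a normed space $\mathbb{Z}$ is smooth if there is a unique $f\in\mathbb{Z}^*$ with $\|f\|=1$ and $f(x)=\|x\|$. *)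

From Stdlib Require Import Reals ClassicalEpsilon.
Open Scope R_scope.

Record NormedSpace := {
  carrier :> Type;
  vzero : carrier;
  vadd : carrier -> carrier -> carrier;
  vopp : carrier -> carrier;
  vscal : R -> carrier -> carrier;
  vnorm : carrier -> R;
  vadd_assoc : forall x y z, vadd x (vadd y z) = vadd (vadd x y) z;
  vadd_comm : forall x y, vadd x y = vadd y x;
  vadd_0l : forall x, vadd vzero x = x;
  vadd_oppr : forall x, vadd x (vopp x) = vzero;
  vscal_addr : forall a x y, vscal a (vadd x y) = vadd (vscal a x) (vscal a y);
  vscal_addl : forall a b x, vscal (a + b) x = vadd (vscal a x) (vscal b x);
  vscal_mul : forall a b x, vscal a (vscal b x) = vscal (a * b) x;
  vscal_1 : forall x, vscal 1 x = x;
  vnorm_eq0 : forall x, vnorm x = 0 -> x = vzero;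
  vnorm_scal : forall a x, vnorm (vscal a x) = Rabs a * vnorm x;
  vnorm_triangle : forall x y, vnorm (vadd x y) <= vnorm x + vnorm y
}.

Arguments vzero {_}.
Arguments vadd {_} _ _.
Arguments vopp {_} _.
Arguments vscal {_} _ _.
Arguments vnorm {_} _.

Definition unit_sphere {X : NormedSpace} (x : X) : Prop := vnorm x = 1.

Definition is_linear {X Y : NormedSpace} (T : X -> Y) : Prop :=
  (forall x y, T (vadd x y) = vadd (T x) (T y)) /\
  (forall a x, T (vscal a x) = vscal a (T x)).

Record BoundedOp (X Y : NormedSpace) := {
  op :> X -> Y;
  op_linear : is_linear op;
  op_bounded : exists M, forall x, vnorm (op x) <= M * vnorm x
}.

Definition opnorm {X Y : NormedSpace} (T : BoundedOp X Y) : R :=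
  epsilon (inhabits 0)
    (fun c => is_lub (fun r => exists x : X, vnorm x <= 1 /\ r = vnorm (T x)) c).

Definition M_T {X Y : NormedSpace} (T : BoundedOp X Y) (x : X) : Prop :=
  unit_sphere x /\ vnorm (T x) = opnorm T.

Definition norming_sequence {X Y : NormedSpace} (T : BoundedOp X Y) (xs : nat -> X) : Prop :=
  (forall n, unit_sphere (xs n)) /\ Un_cv (fun n => vnorm (T (xs n))) (opnorm T).

Definition unit_functional {Z : NormedSpace} (f : Z -> R) : Prop :=
  (forall x y, f (vadd x y) = f x + f y) /\
  (forall a x, f (vscal a x) = a * f x) /\
  is_lub (fun r => exists z : Z, vnorm z <= 1 /\ r = Rabs (f z)) 1.

Definition smooth {Z : NormedSpace} (x : Z) : Prop :=
  x <> vzero /\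
  (exists f : Z -> R, unit_functional f /\ f x = vnorm x) /\
  (forall f g : Z -> R,
      unit_functional f -> f x = vnorm x ->
      unit_functional g -> g x = vnorm x ->
      forall z, f z = g z).

(* Linearity of a functional on B(X,Y) is stated relationally (for operators
   U = S + T, resp. U = a S pointwise), which is what it unfolds to. *)
Definition op_unit_functional {X Y : NormedSpace} (f : BoundedOp X Y -> R) : Prop :=
  (forall S T U : BoundedOp X Y,
      (forall x, U x = vadd (S x) (T x)) -> f U = f S + f T) /\
  (forall (a : R) (S U : BoundedOp X Y),
      (forall x, U x = vscal a (S x)) -> f U = a * f S) /\
  is_lub (fun r => exists S : BoundedOp X Y, opnorm S <= 1 /\ r = Rabs (f S)) 1.

Definition op_smooth {X Y : NormedSpace} (T : BoundedOp X Y) : Prop :=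
  (exists x, T x <> vzero) /\
  (exists f, op_unit_functional f /\ f T = opnorm T) /\
  (forall f g : BoundedOp X Y -> R,
      op_unit_functional f -> f T = opnorm T ->
      op_unit_functional g -> g T = opnorm T ->
      forall S, f S = g S).

Fixpoint lin_comb {X : NormedSpace} (c : nat -> R) (xs : nat -> X) (N : nat) : X :=
  match N with
  | O => vzero
  | S n => vadd (lin_comb c xs n) (vscal (c n) (xs n))
  end.

Definition in_closed_span {X : NormedSpace} (xs : nat -> X) (x : X) : Prop :=
  forall eps, 0 < eps ->
    exists (N : nat) (c : nat -> R), vnorm (vadd x (vopp (lin_comb c xs N))) < eps.

(* For x in M_T and a support functional g of T x, the evaluation S ↦ g (S x) is a
   support functional of T in B(X,Y), so smoothness of T makes all these evaluations
   agree. Testing them on rank-one operators h ⊗ y, with h ranging over the dual ball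
   (Hahn-Banach, obtained here from Zorn's lemma), gives M_T = {±x0} and the uniqueness
   of the support functional at T x0.
   For (iii), if x0 were at distance eps > 0 from the span of a norming sequence (x_n),
   some h in the dual ball vanishes on that span with h x0 = eps; then S = h ⊗ T x0
   kills every x_n, so ‖T + b S‖ ≥ ‖T x_n‖ → ‖T‖ and Hahn-Banach yields a support
   functional of T vanishing at S, while evaluation at x0 takes the value eps ‖T‖ there. *)

From Stdlib Require Import Reals Lra Lia Classical ClassicalEpsilon.
From Stdlib Require Import FunctionalExtensionality PropExtensionality ProofIrrelevance.
From mathcomp Require classical_sets.
Open Scope R_scope.

Section VectorAlgebra.
Variable Z : NormedSpace.
Implicit Types (x y z w : Z) (a b : R).

Lemma vadd_0r x : vadd x vzero = x.
Proof. rewrite vadd_comm. apply vadd_0l. Qed.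

Lemma vadd_cancel_l x y z : vadd x y = vadd x z -> y = z.
Proof.
intro e.
assert (cancel : forall w, vadd (vopp x) (vadd x w) = w).
{ intro w. rewrite vadd_assoc, (vadd_comm _ (vopp x)), vadd_oppr. apply vadd_0l. }
rewrite <- (cancel y), <- (cancel z), e. reflexivity.
Qed.

Lemma vscal_0l x : vscal 0 x = vzero.
Proof.
apply (vadd_cancel_l (vscal 0 x)). rewrite vadd_0r, <- vscal_addl, Rplus_0_r.
reflexivity.
Qed.

Lemma vscal_0r a : vscal a (vzero : Z) = vzero.
Proof. rewrite <- (vscal_0l vzero), vscal_mul, Rmult_0_r. reflexivity. Qed.

Lemma vopp_scal x : vopp x = vscal (-1) x.
Proof.
apply (vadd_cancel_l x). rewrite vadd_oppr.
rewrite <- (vscal_1 _ x) at 1. rewrite <- vscal_addl, Rplus_opp_r, vscal_0l.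
reflexivity.
Qed.

Lemma vadd_scal_m1 x : vadd x (vscal (-1) x) = vzero.
Proof. rewrite <- vopp_scal. apply vadd_oppr. Qed.

Lemma vaddACA x y z w : vadd (vadd x y) (vadd z w) = vadd (vadd x z) (vadd y w).
Proof.
rewrite !vadd_assoc. f_equal. rewrite <- !vadd_assoc. f_equal. apply vadd_comm.
Qed.

Lemma vscal_sub_of_decomp x y z a b :
  vadd x (vscal a z) = vadd y (vscal b z) -> vadd x (vscal (-1) y) = vscal (b - a) z.
Proof.
intro e.
assert (e' := f_equal (fun w => vadd w (vadd (vscal (-1) y) (vscal (- a) z))) e).
cbv beta in e'.
rewrite (vaddACA x), (vaddACA y), vadd_scal_m1, <- !vscal_addl, Rplus_opp_r,
  vscal_0l, vadd_0r, vadd_0l in e'.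
exact e'.
Qed.

Lemma vnorm_0 : vnorm (vzero : Z) = 0.
Proof. rewrite <- (vscal_0l vzero), vnorm_scal, Rabs_R0. ring. Qed.

Lemma vnorm_scal_m1 x : vnorm (vscal (-1) x) = vnorm x.
Proof. rewrite vnorm_scal, Rabs_left by lra. ring. Qed.

Lemma vnorm_ge0 x : 0 <= vnorm x.
Proof.
assert (t := vnorm_triangle _ x (vscal (-1) x)).
rewrite vadd_scal_m1, vnorm_0, vnorm_scal_m1 in t. lra.
Qed.

Lemma vnorm_gt0 x : x <> vzero -> 0 < vnorm x.
Proof.
intro nx. destruct (vnorm_ge0 x) as [p | e]; [exact p |].
exfalso. apply nx, vnorm_eq0. auto.
Qed.

Lemma vnorm_normalize x : x <> vzero -> vnorm (vscal (/ vnorm x) x) = 1.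
Proof.
intro nx. assert (p := vnorm_gt0 x nx).
rewrite vnorm_scal, Rabs_pos_eq by (left; apply Rinv_0_lt_compat, p).
field. lra.
Qed.

End VectorAlgebra.
Lemma zorn_subsets (T : Type) (P : (T -> Prop) -> Prop) :
  (forall F : (T -> Prop) -> Prop, (forall A, F A -> P A) ->
     (forall A B, F A -> F B -> (forall x, A x -> B x) \/ (forall x, B x -> A x)) ->
     P (fun x => exists A, F A /\ A x)) ->
  exists A, P A /\ forall B, P B -> (forall x, A x -> B x) -> forall x, B x -> A x.
Proof.
intro chain_ub.
destruct (@classical_sets.Zorn_bigcup T P) as [A [PA Amax]].
- intros F FP tot.
  replace (classical_sets.bigcup F (fun X => X)) with (fun x => exists A, F A /\ A x).
  { apply chain_ub; [exact FP | exact tot]. }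
  apply functional_extensionality; intro x. apply propositional_extensionality.
  split; [intros [X [FX Xx]]; exists X; auto | intros [X FX Xx]; exists X; auto].
- exists A. split; [exact PA |].
  intros B PB AB x Bx. apply NNPP; intro nx.
  apply (Amax B); [| exact PB].
  split; [exact AB | intro BA; apply nx, BA, Bx].
Qed.

Section HahnBanach.
Variable Z : NormedSpace.
Variable p : Z -> R.
Hypothesis p_add : forall x y, p (vadd x y) <= p x + p y.
Hypothesis p_scal_pos : forall t x, 0 < t -> p (vscal t x) = t * p x.

Record dominated_linear_graph (G : Z -> R -> Prop) : Prop := {
  graph_functional : forall w a b, G w a -> G w b -> a = b;
  graph_add : forall u a w b, G u a -> G w b -> G (vadd u w) (a + b);
  graph_scal : forall t w a, G w a -> G (vscal t w) (t * a);
  graph_dominated : forall w a, G w a -> a <= p w }.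

Lemma dominated_of_directed_cover (D : (Z -> R -> Prop) -> Prop) (U : Z -> R -> Prop) :
  (forall G, D G -> dominated_linear_graph G) ->
  (forall G1 G2, D G1 -> D G2 -> exists G, D G /\
     (forall w a, G1 w a -> G w a) /\ (forall w a, G2 w a -> G w a)) ->
  (forall G, D G -> forall w a, G w a -> U w a) ->
  (forall w a, U w a -> exists G, D G /\ G w a) ->
  dominated_linear_graph U.
Proof.
intros Ddom directed DU cover.
assert (common : forall w a w' a', U w a -> U w' a' ->
          exists G, D G /\ G w a /\ G w' a').
{ intros w a w' a' h h'.
  destruct (cover _ _ h) as [G1 [D1 g1]], (cover _ _ h') as [G2 [D2 g2]].
  destruct (directed _ _ D1 D2) as [G [DG [s1 s2]]]. exists G; auto. }
split.
- intros w a b h h'. destruct (common _ _ _ _ h h') as [G [DG [g g']]].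
  exact (graph_functional _ (Ddom _ DG) _ _ _ g g').
- intros u a w b h h'. destruct (common _ _ _ _ h h') as [G [DG [g g']]].
  exact (DU _ DG _ _ (graph_add _ (Ddom _ DG) _ _ _ _ g g')).
- intros t w a h. destruct (cover _ _ h) as [G [DG g]].
  exact (DU _ DG _ _ (graph_scal _ (Ddom _ DG) t _ _ g)).
- intros w a h. destruct (cover _ _ h) as [G [DG g]].
  exact (graph_dominated _ (Ddom _ DG) _ _ g).
Qed.

Section OneStep.
Variable G : Z -> R -> Prop.
Hypothesis G_dom : dominated_linear_graph G.
Variable v : Z.

(* Subadditivity of [p] separates the two families of bounds on the value at [v]. *)
Lemma exists_extension_value : (exists w a, G w a) ->
  exists c, forall w b, G w b ->
    b - p (vadd w (vscal (-1) v)) <= c /\ c <= p (vadd w v) - b.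
Proof.
intros [w0 [a0 g0]].
assert (sep : forall w b w' b', G w b -> G w' b' ->
          b - p (vadd w (vscal (-1) v)) <= p (vadd w' v) - b').
{ intros w b w' b' g g'.
  assert (e : vadd w w' = vadd (vadd w (vscal (-1) v)) (vadd w' v)).
  { rewrite vaddACA, (vadd_comm _ (vscal (-1) v) v), vadd_scal_m1, vadd_0r.
    reflexivity. }
  assert (h := graph_dominated _ G_dom _ _ (graph_add _ G_dom _ _ _ _ g g')).
  rewrite e in h. assert (t := p_add (vadd w (vscal (-1) v)) (vadd w' v)). lra. }
set (lower := fun r => exists w b, G w b /\ r = b - p (vadd w (vscal (-1) v))).
destruct (completeness lower) as [c [c_ub c_lub]].
- exists (p (vadd w0 v) - a0). intros r [w [b [g ->]]]. exact (sep _ _ _ _ g g0).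
- exists (a0 - p (vadd w0 (vscal (-1) v))), w0, a0. auto.
- exists c. intros w b g. split.
  + apply c_ub. exists w, b. auto.
  + apply c_lub. intros r [w' [b' [g' ->]]]. exact (sep _ _ _ _ g' g).
Qed.

Definition graph_extension (c : R) (w : Z) (b : R) : Prop :=
  exists u a t, G u a /\ w = vadd u (vscal t v) /\ b = a + t * c.

Lemma graph_extension_dominated (c : R) : (forall a, ~ G v a) ->
  (forall w b, G w b ->
     b - p (vadd w (vscal (-1) v)) <= c /\ c <= p (vadd w v) - b) ->
  dominated_linear_graph (graph_extension c).
Proof.
intros v_new c_bounds. split.
- intros w b1 b2 [u1 [a1 [t1 [g1 [-> ->]]]]] [u2 [a2 [t2 [g2 [e ->]]]]].
  destruct (Req_dec t1 t2) as [<- | nt].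
  + rewrite (vadd_comm _ u1), (vadd_comm _ u2) in e. apply vadd_cancel_l in e.
    subst u2. rewrite (graph_functional _ G_dom _ _ _ g1 g2). reflexivity.
  + exfalso. apply vscal_sub_of_decomp in e.
    assert (g := graph_scal _ G_dom (/ (t2 - t1)) _ _
                   (graph_add _ G_dom _ _ _ _ g1 (graph_scal _ G_dom (-1) _ _ g2))).
    rewrite e, vscal_mul, Rinv_l, vscal_1 in g by lra.
    exact (v_new _ g).
- intros w1 b1 w2 b2 [u1 [a1 [t1 [g1 [-> ->]]]]] [u2 [a2 [t2 [g2 [-> ->]]]]].
  exists (vadd u1 u2), (a1 + a2), (t1 + t2).
  split; [exact (graph_add _ G_dom _ _ _ _ g1 g2) | split; [| ring]].
  rewrite vaddACA, vscal_addl. reflexivity.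
- intros s w b [u [a [t [g [-> ->]]]]].
  exists (vscal s u), (s * a), (s * t).
  split; [exact (graph_scal _ G_dom s _ _ g) | split; [| ring]].
  rewrite vscal_addr, vscal_mul. reflexivity.
- intros w b [u [a [t [g [-> ->]]]]].
  destruct (Rtotal_order t 0) as [t_neg | [-> | t_pos]].
  + assert (s_pos : 0 < - t) by lra.
    destruct (c_bounds _ _ (graph_scal _ G_dom (/ - t) _ _ g)) as [lo _].
    assert (e : vadd u (vscal t v) = vscal (- t) (vadd (vscal (/ - t) u) (vscal (-1) v))).
    { rewrite vscal_addr, !vscal_mul, Rinv_r, vscal_1 by lra.
      replace (- t * -1) with t by ring. reflexivity. }
    rewrite e, p_scal_pos by exact s_pos.
    apply (Rmult_le_compat_l (- t)) in lo; [| lra].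
    replace (- t * (/ - t * a - p (vadd (vscal (/ - t) u) (vscal (-1) v))))
      with (a - (- t) * p (vadd (vscal (/ - t) u) (vscal (-1) v))) in lo
      by (field; lra).
    lra.
  + rewrite vscal_0l, vadd_0r, Rmult_0_l, Rplus_0_r.
    exact (graph_dominated _ G_dom _ _ g).
  + destruct (c_bounds _ _ (graph_scal _ G_dom (/ t) _ _ g)) as [_ hi].
    assert (e : vadd u (vscal t v) = vscal t (vadd (vscal (/ t) u) v)).
    { rewrite vscal_addr, vscal_mul, Rinv_r, vscal_1 by lra. reflexivity. }
    rewrite e, p_scal_pos by exact t_pos.
    apply (Rmult_le_compat_l t) in hi; [| lra].
    replace (t * (p (vadd (vscal (/ t) u) v) - / t * a))
      with (t * p (vadd (vscal (/ t) u) v) - a) in hi by (field; lra).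
    lra.
Qed.

Lemma dominated_graph_extend : (exists w a, G w a) -> (forall a, ~ G v a) ->
  exists G', dominated_linear_graph G' /\ (forall w a, G w a -> G' w a) /\
    exists c, G' v c.
Proof.
intros G_ne v_new.
destruct (exists_extension_value G_ne) as [c c_bounds].
exists (graph_extension c). split; [exact (graph_extension_dominated c v_new c_bounds) |].
split.
- intros w a g. exists w, a, 0. split; [exact g | split; [| ring]].
  rewrite vscal_0l, vadd_0r. reflexivity.
- destruct G_ne as [w0 [a0 g0]]. exists c, (vscal 0 w0), (0 * a0), 1.
  split; [exact (graph_scal _ G_dom 0 _ _ g0) | split; [| ring]].
  rewrite vscal_0l, vadd_0l, vscal_1. reflexivity.
Qed.

End OneStep.

Lemma dominated_chain_union (Gam : Z -> R -> Prop) (F : (Z * R -> Prop) -> Prop) :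
  dominated_linear_graph Gam ->
  (forall X, F X -> dominated_linear_graph (fun w a => Gam w a \/ X (w, a))) ->
  (forall X1 X2, F X1 -> F X2 ->
     (forall q, X1 q -> X2 q) \/ (forall q, X2 q -> X1 q)) ->
  dominated_linear_graph (fun w a => Gam w a \/ exists X, F X /\ X (w, a)).
Proof.
intros Gam_dom FP chain.
apply (dominated_of_directed_cover
         (fun G => G = Gam \/ exists X, F X /\ G = (fun w a => Gam w a \/ X (w, a)))).
- intros G [-> | [X [FX ->]]]; [exact Gam_dom | exact (FP X FX)].
- intros G1 G2 [-> | [X1 [F1 ->]]] [-> | [X2 [F2 ->]]].
  + exists Gam. auto.
  + exists (fun w a => Gam w a \/ X2 (w, a)). split; [right; eauto | auto].
  + exists (fun w a => Gam w a \/ X1 (w, a)). split; [right; eauto | auto].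
  + destruct (chain _ _ F1 F2) as [s | s].
    * exists (fun w a => Gam w a \/ X2 (w, a)).
      split; [right; eauto | split; intros w a [h | h]; auto].
    * exists (fun w a => Gam w a \/ X1 (w, a)).
      split; [right; eauto | split; intros w a [h | h]; auto].
- intros G [-> | [X [FX ->]]] w a h; [left; exact h |].
  destruct h as [h | h]; [left; exact h | right; exists X; auto].
- intros w a [h | [X [FX h]]].
  + exists Gam. auto.
  + exists (fun w a => Gam w a \/ X (w, a)). split; [right; eauto | auto].
Qed.

Theorem hahn_banach (Gam : Z -> R -> Prop) :
  dominated_linear_graph Gam -> (exists w a, Gam w a) ->
  exists f : Z -> R,
    (forall x y, f (vadd x y) = f x + f y) /\ (forall a x, f (vscal a x) = a * f x) /\
    (forall x, f x <= p x) /\ (forall w a, Gam w a -> f w = a).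
Proof.
intros Gam_dom Gam_ne.
set (P := fun X : Z * R -> Prop => dominated_linear_graph (fun w a => Gam w a \/ X (w, a))).
destruct (zorn_subsets _ P) as [A [PA Amax]].
- intros F FP chain. exact (dominated_chain_union Gam F Gam_dom FP chain).
- set (G := fun w a => Gam w a \/ A (w, a)).
  assert (total : forall v, exists a, G v a).
  { intro v. apply NNPP; intro nv.
    destruct (dominated_graph_extend G PA v) as [G' [G'_dom [GG' [c g']]]].
    - destruct Gam_ne as [w [a g]]. exists w, a. left. exact g.
    - intros a g. apply nv. exists a. exact g.
    - apply nv. exists c. right.
      apply (Amax (fun q => G' (fst q) (snd q)));
        [| intros [w a] h; apply GG'; right; exact h | exact g'].
      apply (dominated_of_directed_cover (fun H => H = G')).
      + intros H ->. exact G'_dom.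
      + intros G1 G2 -> ->. exists G'. auto.
      + intros H -> w a h. right. exact h.
      + intros w a [h | h]; exists G'; split; auto. apply GG'. left. exact h. }
  set (f := fun v => epsilon (inhabits 0) (G v)).
  assert (f_spec : forall v, G v (f v)) by (intro v; exact (epsilon_spec _ _ (total v))).
  exists f. split; [| split; [| split]].
  + intros x y. apply (graph_functional _ PA _ _ _ (f_spec _)).
    exact (graph_add _ PA _ _ _ _ (f_spec x) (f_spec y)).
  + intros a x. apply (graph_functional _ PA _ _ _ (f_spec _)).
    exact (graph_scal _ PA a _ _ (f_spec x)).
  + intro x. exact (graph_dominated _ PA _ _ (f_spec x)).
  + intros w a g. exact (graph_functional _ PA _ _ _ (f_spec w) (or_introl g)).
Qed.

End HahnBanach.

Section DualBall.
Variable Z : NormedSpace.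

Definition linear_functional (f : Z -> R) : Prop :=
  (forall x y, f (vadd x y) = f x + f y) /\ (forall a x, f (vscal a x) = a * f x).

Definition in_dual_ball (f : Z -> R) : Prop :=
  linear_functional f /\ forall z, Rabs (f z) <= vnorm z.

Lemma linear_functional_0 (f : Z -> R) : linear_functional f -> f vzero = 0.
Proof. intros [_ f_scal]. rewrite <- (vscal_0l _ vzero), f_scal. ring. Qed.

Lemma exists_functional_annihilating (M : Z -> Prop) (v : Z) (c : R) :
  M vzero -> (forall x y, M x -> M y -> M (vadd x y)) ->
  (forall a x, M x -> M (vscal a x)) ->
  0 <= c -> (forall m, M m -> c <= vnorm (vadd v (vopp m))) ->
  exists f, in_dual_ball f /\ f v = c /\ forall m, M m -> f m = 0.
Proof.
intros M0 M_add M_scal c_ge0 dist.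
set (Gam := fun w a => exists m t, M m /\ w = vadd m (vscal t v) /\ a = t * c).
assert (norm_scal_pos : forall t (x : Z), 0 < t -> vnorm (vscal t x) = t * vnorm x).
{ intros t x t_pos. rewrite vnorm_scal, Rabs_pos_eq by lra. reflexivity. }
destruct (hahn_banach Z vnorm (vnorm_triangle Z) norm_scal_pos Gam)
  as [f [f_add [f_scal [f_le f_Gam]]]].
- split.
  + intros w a b [m1 [t1 [M1 [-> ->]]]] [m2 [t2 [M2 [e ->]]]].
    destruct (Req_dec t1 t2) as [<- | nt]; [reflexivity |].
    apply vscal_sub_of_decomp in e.
    assert (v_in_M : M (vscal (/ (t2 - t1)) (vadd m1 (vscal (-1) m2)))).
    { apply M_scal, M_add; [exact M1 | apply M_scal, M2]. }
    assert (h := dist _ v_in_M).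
    rewrite e, vscal_mul, Rinv_l, vscal_1, vadd_oppr, vnorm_0 in h by lra.
    replace c with 0 by lra. ring.
  + intros u a w b [m1 [t1 [M1 [-> ->]]]] [m2 [t2 [M2 [-> ->]]]].
    exists (vadd m1 m2), (t1 + t2). split; [apply M_add; assumption | split; [| ring]].
    rewrite vaddACA, vscal_addl. reflexivity.
  + intros s w a [m [t [Mm [-> ->]]]].
    exists (vscal s m), (s * t). split; [apply M_scal, Mm | split; [| ring]].
    rewrite vscal_addr, vscal_mul. reflexivity.
  + intros w a [m [t [Mm [-> ->]]]].
    destruct (Rle_lt_dec t 0) as [t_le0 | t_pos].
    * assert (nn := vnorm_ge0 Z (vadd m (vscal t v))). nra.
    * assert (e : vadd m (vscal t v) = vscal t (vadd v (vopp (vscal (- / t) m)))).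
      { rewrite vopp_scal, vscal_addr, !vscal_mul.
        replace (t * -1 * - / t) with 1 by (field; lra).
        rewrite vscal_1. apply vadd_comm. }
      rewrite e, norm_scal_pos by exact t_pos.
      apply Rmult_le_compat_l; [lra | apply dist, M_scal, Mm].
- exists v, (1 * c), vzero, 1. rewrite vadd_0l, vscal_1. auto.
- exists f. split; [split; [split; assumption |] | split].
  + intro z. apply Rabs_le. split; [| apply f_le].
    assert (h := f_le (vscal (-1) z)). rewrite f_scal, vnorm_scal_m1 in h. lra.
  + rewrite (f_Gam v (1 * c)); [ring |].
    exists vzero, 1. rewrite vadd_0l, vscal_1. auto.
  + intros m Mm. rewrite (f_Gam m (0 * c)); [ring |].
    exists m, 0. rewrite vscal_0l, vadd_0r. auto.
Qed.

Lemma exists_support_functional (z : Z) : z <> vzero ->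
  exists f, in_dual_ball f /\ f z = vnorm z.
Proof.
intro nz.
destruct (exists_functional_annihilating (fun m => m = vzero) z (vnorm z))
  as [f [f_ball [f_z _]]].
- reflexivity.
- intros x y -> ->. apply vadd_0l.
- intros a x ->. apply vscal_0r.
- apply vnorm_ge0.
- intros m ->. rewrite vopp_scal, vscal_0r, vadd_0r. apply Rle_refl.
- exists f. auto.
Qed.

Lemma eq_of_dual_ball (x y : Z) :
  (forall f, in_dual_ball f -> f x = f y) -> x = y.
Proof.
intro agree.
assert (diff0 : vadd x (vscal (-1) y) = vzero).
{ apply NNPP; intro nd.
  destruct (exists_support_functional _ nd) as [f [[[f_add f_scal] f_le] f_d]].
  assert (pos := vnorm_gt0 Z _ nd).
  rewrite f_add, f_scal, (agree f) in f_d by (split; [split |]; assumption). lra. }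
rewrite <- (vadd_0r _ x), <- (vadd_scal_m1 _ y), vadd_assoc, (vadd_comm _ x y),
  <- vadd_assoc, diff0.
apply vadd_0r.
Qed.

Lemma unit_functional_of_support (f : Z -> R) (z : Z) :
  in_dual_ball f -> z <> vzero -> f z = vnorm z -> unit_functional f.
Proof.
intros [[f_add f_scal] f_le] nz f_z.
split; [exact f_add | split; [exact f_scal | split]].
- intros r [y [y_le ->]]. eapply Rle_trans; [apply f_le | exact y_le].
- intros b ub. apply ub. exists (vscal (/ vnorm z) z).
  assert (pos := vnorm_gt0 Z z nz).
  rewrite vnorm_normalize, f_scal, f_z, Rinv_l, Rabs_R1 by (auto; lra).
  split; [lra | reflexivity].
Qed.

Lemma dual_ball_of_unit_functional (f : Z -> R) : unit_functional f -> in_dual_ball f.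
Proof.
intros [f_add [f_scal [f_ub _]]]. split; [split; assumption |].
intro z. destruct (classic (z = vzero)) as [-> | nz].
- rewrite linear_functional_0 by (split; assumption). rewrite vnorm_0, Rabs_R0. lra.
- assert (pos := vnorm_gt0 Z z nz).
  assert (h : Rabs (f (vscal (/ vnorm z) z)) <= 1).
  { apply f_ub. exists (vscal (/ vnorm z) z).
    rewrite vnorm_normalize by exact nz. auto with real. }
  rewrite f_scal, Rabs_mult, Rabs_pos_eq in h by (left; apply Rinv_0_lt_compat, pos).
  apply (Rmult_le_compat_l (vnorm z)) in h; [| lra].
  rewrite <- Rmult_assoc, Rinv_r, Rmult_1_l in h by lra. lra.
Qed.

Lemma smooth_of_unique_support (z : Z) : z <> vzero ->
  (forall f g, in_dual_ball f -> f z = vnorm z -> in_dual_ball g -> g z = vnorm z ->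
     forall y, f y = g y) ->
  smooth z.
Proof.
intros nz unique. split; [exact nz | split].
- destruct (exists_support_functional z nz) as [f [f_ball f_z]].
  exists f. split; [exact (unit_functional_of_support f z f_ball nz f_z) | exact f_z].
- intros f g f_unit f_z g_unit g_z.
  exact (unique f g (dual_ball_of_unit_functional f f_unit) f_z
                    (dual_ball_of_unit_functional g g_unit) g_z).
Qed.

End DualBall.

Section OperatorSpace.
Variables X Y : NormedSpace.
Implicit Types S T U : BoundedOp X Y.

Lemma op_ext S T : (forall x, S x = T x) -> S = T.
Proof.
destruct S as [s s_lin s_bd], T as [t t_lin t_bd]. simpl. intro e.
assert (st : s = t) by (apply functional_extensionality; exact e).
subst t. f_equal; apply proof_irrelevance.
Qed.

Lemma op_vzero T : T vzero = vzero.
Proof.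
destruct (op_linear X Y T) as [_ T_scal].
rewrite <- (vscal_0l _ vzero), T_scal. apply vscal_0l.
Qed.

Lemma opnorm_lub T :
  is_lub (fun r => exists x : X, vnorm x <= 1 /\ r = vnorm (T x)) (opnorm T).
Proof.
unfold opnorm. apply epsilon_spec.
destruct (op_bounded X Y T) as [M T_bd].
destruct (completeness (fun r => exists x : X, vnorm x <= 1 /\ r = vnorm (T x)))
  as [c c_lub]; [| | exists c; exact c_lub].
- exists (Rabs M). intros r [x [x_le ->]].
  assert (h := T_bd x). assert (nx := vnorm_ge0 _ x).
  assert (M_le := Rle_abs M). assert (M_ge := Rabs_pos M). nra.
- exists (vnorm (T vzero)), vzero. rewrite vnorm_0. split; [lra | reflexivity].
Qed.

Lemma opnorm_ub T x : vnorm x <= 1 -> vnorm (T x) <= opnorm T.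
Proof. intro x_le. apply (opnorm_lub T). exists x. auto. Qed.

Lemma opnorm_le T c : (forall x, vnorm x <= 1 -> vnorm (T x) <= c) -> opnorm T <= c.
Proof. intro bd. apply (opnorm_lub T). intros r [x [x_le ->]]. exact (bd x x_le). Qed.

Lemma opnorm_ge0 T : 0 <= opnorm T.
Proof.
apply Rle_trans with (vnorm (T vzero)); [apply vnorm_ge0 |].
apply opnorm_ub. rewrite vnorm_0. lra.
Qed.

Lemma op_norm_bound T x : vnorm (T x) <= opnorm T * vnorm x.
Proof.
destruct (classic (x = vzero)) as [-> | nx].
- rewrite op_vzero, !vnorm_0. lra.
- assert (pos := vnorm_gt0 _ x nx).
  assert (h : vnorm (T (vscal (/ vnorm x) x)) <= opnorm T).
  { apply opnorm_ub. rewrite vnorm_normalize by exact nx. lra. }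
  rewrite (proj2 (op_linear X Y T)), vnorm_scal, Rabs_pos_eq in h
    by (left; apply Rinv_0_lt_compat, pos).
  apply (Rmult_le_compat_l (vnorm x)) in h; [| lra].
  rewrite <- Rmult_assoc, Rinv_r, Rmult_1_l in h by lra. lra.
Qed.

Definition op_zero : BoundedOp X Y.
Proof.
refine (Build_BoundedOp X Y (fun _ => vzero) _ _).
- split; intros; [symmetry; apply vadd_0l | symmetry; apply vscal_0r].
- exists 0. intro x. rewrite vnorm_0. lra.
Defined.

Definition op_add S T : BoundedOp X Y.
Proof.
refine (Build_BoundedOp X Y (fun x => vadd (S x) (T x)) _ _).
- destruct (op_linear X Y S) as [S_add S_scal], (op_linear X Y T) as [T_add T_scal].
  split; intros.
  + rewrite S_add, T_add. apply vaddACA.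
  + rewrite S_scal, T_scal. symmetry. apply vscal_addr.
- exists (opnorm S + opnorm T). intro x.
  eapply Rle_trans; [apply vnorm_triangle |].
  assert (hS := op_norm_bound S x). assert (hT := op_norm_bound T x). lra.
Defined.

Definition op_scal (a : R) S : BoundedOp X Y.
Proof.
refine (Build_BoundedOp X Y (fun x => vscal a (S x)) _ _).
- destruct (op_linear X Y S) as [S_add S_scal].
  split; intros.
  + rewrite S_add. apply vscal_addr.
  + rewrite S_scal, !vscal_mul, Rmult_comm. reflexivity.
- exists (Rabs a * opnorm S). intro x. rewrite vnorm_scal, Rmult_assoc.
  apply Rmult_le_compat_l; [apply Rabs_pos | apply op_norm_bound].
Defined.

Lemma opnorm_triangle S T : opnorm (op_add S T) <= opnorm S + opnorm T.
Proof.
apply opnorm_le. intros x x_le. simpl.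
eapply Rle_trans; [apply vnorm_triangle |].
assert (hS := opnorm_ub S x x_le). assert (hT := opnorm_ub T x x_le). lra.
Qed.

Lemma opnorm_scal_le a S : opnorm (op_scal a S) <= Rabs a * opnorm S.
Proof.
apply opnorm_le. intros x x_le. simpl. rewrite vnorm_scal.
apply Rmult_le_compat_l; [apply Rabs_pos | exact (opnorm_ub S x x_le)].
Qed.

Lemma opnorm_scal a S : opnorm (op_scal a S) = Rabs a * opnorm S.
Proof.
apply Rle_antisym; [apply opnorm_scal_le |].
destruct (Req_dec a 0) as [-> | a0].
- rewrite Rabs_R0, Rmult_0_l. apply opnorm_ge0.
- assert (back : op_scal (/ a) (op_scal a S) = S).
  { apply op_ext. intro x. simpl. rewrite vscal_mul, Rinv_l, vscal_1 by exact a0.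
    reflexivity. }
  assert (h := opnorm_scal_le (/ a) (op_scal a S)). rewrite back, Rabs_inv in h.
  assert (pos := Rabs_pos_lt a a0).
  apply (Rmult_le_compat_l (Rabs a)) in h; [| lra].
  rewrite <- Rmult_assoc, Rinv_r, Rmult_1_l in h by lra. exact h.
Qed.

Lemma opnorm_eq0 S : opnorm S = 0 -> S = op_zero.
Proof.
intro n0. apply op_ext. intro x. apply vnorm_eq0.
assert (h := op_norm_bound S x). rewrite n0, Rmult_0_l in h.
assert (nn := vnorm_ge0 _ (S x)). simpl. lra.
Qed.

Definition OpSpace : NormedSpace.
Proof.
refine (Build_NormedSpace (BoundedOp X Y) op_zero op_add (op_scal (-1)) op_scal opnorm
          _ _ _ _ _ _ _ _ opnorm_eq0 opnorm_scal opnorm_triangle);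
  intros; apply op_ext; intro; simpl.
- apply vadd_assoc.
- apply vadd_comm.
- apply vadd_0l.
- apply vadd_scal_m1.
- apply vscal_addr.
- apply vscal_addl.
- apply vscal_mul.
- apply vscal_1.
Defined.

Lemma op_unit_functional_of_unit (f : OpSpace -> R) :
  unit_functional f -> op_unit_functional f.
Proof.
intros [f_add [f_scal f_lub]]. split; [| split; [| exact f_lub]].
- intros S T U hU. replace U with (op_add S T) by (symmetry; apply op_ext, hU).
  apply f_add.
- intros a S U hU. replace U with (op_scal a S) by (symmetry; apply op_ext, hU).
  apply f_scal.
Qed.

Lemma eval_in_dual_ball (x0 : X) (g : Y -> R) :
  vnorm x0 <= 1 -> in_dual_ball Y g -> in_dual_ball OpSpace (fun S => g (S x0)).
Proof.
intros x0_le [[g_add g_scal] g_le]. split; [split |].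
- intros S T. apply g_add.
- intros a S. apply g_scal.
- intro S. eapply Rle_trans; [apply g_le | exact (opnorm_ub S x0 x0_le)].
Qed.

Definition rank_one (h : X -> R) (h_ball : in_dual_ball X h) (y : Y) : BoundedOp X Y.
Proof.
refine (Build_BoundedOp X Y (fun x => vscal (h x) y) _ _).
- destruct h_ball as [[h_add h_scal] _]. split; intros.
  + rewrite h_add. apply vscal_addl.
  + rewrite h_scal, vscal_mul. reflexivity.
- exists (vnorm y). intro x. rewrite vnorm_scal, Rmult_comm.
  apply Rmult_le_compat_l; [apply vnorm_ge0 | apply (proj2 h_ball)].
Defined.

End OperatorSpace.

Section Span.
Variable X : NormedSpace.
Variable xs : nat -> X.

Definition span (m : X) : Prop :=
  exists N c, (forall k, (N <= k)%nat -> c k = 0) /\ m = lin_comb c xs N.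

Lemma lin_comb_add (c d : nat -> R) N :
  lin_comb (fun k => c k + d k) xs N = vadd (lin_comb c xs N) (lin_comb d xs N).
Proof.
induction N as [| N IH]; simpl.
- symmetry. apply vadd_0l.
- rewrite IH, vscal_addl. apply vaddACA.
Qed.

Lemma lin_comb_scal (a : R) (c : nat -> R) N :
  lin_comb (fun k => a * c k) xs N = vscal a (lin_comb c xs N).
Proof.
induction N as [| N IH]; simpl.
- symmetry. apply vscal_0r.
- rewrite IH, vscal_addr, vscal_mul. reflexivity.
Qed.

Lemma lin_comb_pad (c : nat -> R) N d :
  (forall k, (N <= k)%nat -> c k = 0) -> lin_comb c xs (N + d) = lin_comb c xs N.
Proof.
intro c_supp. induction d as [| d IH].
- rewrite Nat.add_0_r. reflexivity.
- rewrite Nat.add_succ_r. simpl. rewrite IH, c_supp, vscal_0l by lia. apply vadd_0r.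
Qed.

Lemma lin_comb_vanish (c : nat -> R) N :
  (forall k, (k < N)%nat -> c k = 0) -> lin_comb c xs N = vzero.
Proof.
induction N as [| N IH]; intro c0; simpl; [reflexivity |].
rewrite IH by (intros k hk; apply c0; lia).
rewrite c0, vscal_0l by lia. apply vadd_0l.
Qed.

Lemma span_0 : span vzero.
Proof. exists O, (fun _ => 0). split; reflexivity. Qed.

Lemma span_add m1 m2 : span m1 -> span m2 -> span (vadd m1 m2).
Proof.
intros [N [c [c_supp ->]]] [K [d [d_supp ->]]].
exists (N + K)%nat, (fun k => c k + d k). split.
- intros k hk. rewrite c_supp, d_supp by lia. ring.
- rewrite lin_comb_add, (lin_comb_pad c N K c_supp), Nat.add_comm,
    (lin_comb_pad d K N d_supp).
  reflexivity.
Qed.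

Lemma span_scal a m : span m -> span (vscal a m).
Proof.
intros [N [c [c_supp ->]]]. exists N, (fun k => a * c k). split.
- intros k hk. rewrite c_supp by exact hk. ring.
- symmetry. apply lin_comb_scal.
Qed.

Lemma span_gen n : span (xs n).
Proof.
exists (S n), (fun k => if Nat.eq_dec k n then 1 else 0). split.
- intros k hk. destruct (Nat.eq_dec k n); [lia | reflexivity].
- simpl. rewrite lin_comb_vanish.
  + destruct (Nat.eq_dec n n) as [_ | nn]; [| contradiction].
    rewrite vscal_1, vadd_0l. reflexivity.
  + intros k hk. destruct (Nat.eq_dec k n); [lia | reflexivity].
Qed.

Lemma dist_span_pos_of_not_in_closed_span (x : X) : ~ in_closed_span xs x ->
  exists eps, 0 < eps /\ forall m, span m -> eps <= vnorm (vadd x (vopp m)).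
Proof.
intro far. apply NNPP. intro near. apply far. intros eps eps_pos.
apply NNPP. intro no_approx. apply near. exists eps. split; [exact eps_pos |].
intros m [N [c [_ ->]]]. apply Rnot_lt_le. intro close.
apply no_approx. exists N, c. exact close.
Qed.

End Span.

Lemma Un_cv_le_ub (u : nat -> R) (l c : R) : Un_cv u l -> (forall n, u n <= c) -> l <= c.
Proof.
intros cv u_le. apply (Rle_cv_lim (Vn := fun _ => c) u_le cv).
intros eps eps_pos. exists O. intros n _. unfold R_dist. rewrite Rminus_diag, Rabs_R0.
exact eps_pos.
Qed.

Section SmoothOperator.
Variables X Y : NormedSpace.
Variable T : BoundedOp X Y.
Hypothesis T_smooth : op_smooth T.

Lemma op_smooth_nonzero : T <> (vzero : OpSpace X Y).
Proof.
destruct T_smooth as [[x1 Tx1] _]. intro T0. apply Tx1. rewrite T0. reflexivity.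
Qed.

Lemma opnorm_pos_of_smooth : 0 < opnorm T.
Proof. exact (vnorm_gt0 (OpSpace X Y) T op_smooth_nonzero). Qed.

Lemma exists_support_at_norm_attained (x : X) : M_T T x ->
  exists g, in_dual_ball Y g /\ g (T x) = opnorm T.
Proof.
intros [_ Tx]. rewrite <- Tx. apply exists_support_functional.
intro Tx0. rewrite Tx0, vnorm_0 in Tx. assert (pos := opnorm_pos_of_smooth). lra.
Qed.

Lemma smooth_supports_agree (f g : OpSpace X Y -> R) :
  in_dual_ball _ f -> f T = opnorm T -> in_dual_ball _ g -> g T = opnorm T ->
  forall S, f S = g S.
Proof.
intros f_ball f_T g_ball g_T. destruct T_smooth as [_ [_ unique]].
apply unique; [| exact f_T | | exact g_T]; apply op_unit_functional_of_unit.
- exact (unit_functional_of_support _ f T f_ball op_smooth_nonzero f_T).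
- exact (unit_functional_of_support _ g T g_ball op_smooth_nonzero g_T).
Qed.

(* [S ↦ g (S x)] is a support functional of [T]; test smoothness on rank-one operators. *)
Lemma rank_one_evaluations_agree (x x' : X) (g g' : Y -> R) :
  vnorm x <= 1 -> in_dual_ball Y g -> g (T x) = opnorm T ->
  vnorm x' <= 1 -> in_dual_ball Y g' -> g' (T x') = opnorm T ->
  forall (h : X -> R) (h_ball : in_dual_ball X h) (y : Y), h x * g y = h x' * g' y.
Proof.
intros x_le g_ball g_Tx x'_le g'_ball g'_Tx' h h_ball y.
assert (E := smooth_supports_agree _ _ (eval_in_dual_ball X Y x g x_le g_ball) g_Tx
               (eval_in_dual_ball X Y x' g' x'_le g'_ball) g'_Tx' (rank_one X Y h h_ball y)).
simpl in E. rewrite (proj2 (proj1 g_ball)), (proj2 (proj1 g'_ball)) in E. exact E.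
Qed.

Lemma norm_attainment_set (x0 : X) : M_T T x0 ->
  forall x, M_T T x <-> x = x0 \/ x = vopp x0.
Proof.
intros x0_M x. destruct x0_M as [x0_unit Tx0]. split.
- intros x_M.
  destruct (exists_support_at_norm_attained x0 (conj x0_unit Tx0)) as [g0 [g0_ball g0_Tx0]].
  destruct (exists_support_at_norm_attained x x_M) as [g1 [g1_ball g1_Tx]].
  destruct x_M as [x_unit _]. unfold unit_sphere in x0_unit, x_unit.
  assert (pos := opnorm_pos_of_smooth).
  set (mu := g1 (T x0) / opnorm T).
  assert (x0_eq : x0 = vscal mu x).
  { apply eq_of_dual_ball. intros h h_ball.
    assert (E := rank_one_evaluations_agree x0 x g0 g1 (Req_le _ _ x0_unit) g0_ball g0_Tx0
                   (Req_le _ _ x_unit) g1_ball g1_Tx h h_ball (T x0)).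
    rewrite g0_Tx0 in E. rewrite (proj2 (proj1 h_ball)).
    apply (Rmult_eq_reg_r (opnorm T)); [| lra]. rewrite E. unfold mu. field. lra. }
  assert (mu_abs : Rabs mu = 1).
  { rewrite x0_eq, vnorm_scal, x_unit in x0_unit. lra. }
  destruct (Rle_lt_dec 0 mu) as [mu_ge0 | mu_neg].
  + left. rewrite Rabs_pos_eq in mu_abs by exact mu_ge0.
    rewrite x0_eq, mu_abs, vscal_1. reflexivity.
  + right. rewrite Rabs_left in mu_abs by exact mu_neg.
    rewrite x0_eq, vopp_scal, vscal_mul.
    replace (-1 * mu) with 1 by lra. rewrite vscal_1. reflexivity.
- intros [-> | ->]; [split; assumption |].
  unfold M_T, unit_sphere. rewrite vopp_scal, (proj2 (op_linear X Y T)), !vnorm_scal_m1.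
  split; assumption.
Qed.

Lemma smooth_image_of_norm_attained (x0 : X) : M_T T x0 -> smooth (T x0).
Proof.
intros [x0_unit Tx0]. unfold unit_sphere in x0_unit.
apply smooth_of_unique_support.
- intro T0. rewrite T0, vnorm_0 in Tx0. assert (pos := opnorm_pos_of_smooth). lra.
- intros f g f_ball f_Tx0 g_ball g_Tx0 z. rewrite Tx0 in f_Tx0, g_Tx0.
  assert (x0_nz : x0 <> vzero) by (intro e; rewrite e, vnorm_0 in x0_unit; lra).
  destruct (exists_support_functional X x0 x0_nz) as [h0 [h0_ball h0_x0]].
  rewrite x0_unit in h0_x0.
  assert (E := rank_one_evaluations_agree x0 x0 f g (Req_le _ _ x0_unit) f_ball f_Tx0
                 (Req_le _ _ x0_unit) g_ball g_Tx0 h0 h0_ball z).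
  rewrite h0_x0, !Rmult_1_l in E. exact E.
Qed.

Lemma in_closed_span_of_norming (x0 : X) : M_T T x0 ->
  forall xs, norming_sequence T xs -> in_closed_span xs x0.
Proof.
intros x0_M xs [xs_unit Txs_cv]. apply NNPP. intro far.
destruct (dist_span_pos_of_not_in_closed_span X xs x0 far) as [eps [eps_pos dist]].
destruct (exists_functional_annihilating X (span X xs) x0 eps (span_0 X xs)
            (span_add X xs) (span_scal X xs) (Rlt_le _ _ eps_pos) dist)
  as [h [h_ball [h_x0 h_span]]].
set (S := rank_one X Y h h_ball (T x0)).
assert (S_xs : forall b n,
          op_add X Y T (op_scal X Y (-1) (op_scal X Y b S)) (xs n) = T (xs n)).
{ intros b n. simpl. rewrite (h_span _ (span_gen X xs n)), vscal_0l, !vscal_0r.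
  apply vadd_0r. }
destruct (exists_functional_annihilating (OpSpace X Y)
            (fun U => exists b, U = op_scal X Y b S) T (opnorm T))
  as [Phi [Phi_ball [Phi_T Phi_S]]].
- exists 0. apply op_ext. intro x. symmetry. apply vscal_0l.
- intros U V [b1 ->] [b2 ->]. exists (b1 + b2). apply op_ext. intro x.
  symmetry. apply vscal_addl.
- intros a U [b ->]. exists (a * b). apply op_ext. intro x. apply vscal_mul.
- apply opnorm_ge0.
- intros U [b ->]. apply (Un_cv_le_ub _ _ _ Txs_cv). intro n.
  rewrite <- (S_xs b n). apply opnorm_ub. rewrite xs_unit. lra.
- destruct (exists_support_at_norm_attained x0 x0_M) as [g0 [g0_ball g0_Tx0]].
  destruct x0_M as [x0_unit _].
  assert (E := smooth_supports_agree Phi (fun U => g0 (U x0)) Phi_ball Phi_T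
                 (eval_in_dual_ball X Y x0 g0 (Req_le _ _ x0_unit) g0_ball) g0_Tx0 S).
  simpl in E. rewrite (proj2 (proj1 g0_ball)), h_x0, g0_Tx0 in E.
  rewrite Phi_S in E by (exists 1; apply op_ext; intro x; symmetry; apply vscal_1).
  assert (pos := Rmult_lt_0_compat _ _ eps_pos opnorm_pos_of_smooth). lra.
Qed.

End SmoothOperator.

Theorem theorem3p6 (X Y : NormedSpace) (T : BoundedOp X Y) :
  op_smooth T ->
  (exists x, M_T T x) ->
  exists x0 : X,
    unit_sphere x0 /\
    (forall x, M_T T x <-> (x = x0 \/ x = vopp x0)) /\
    smooth (T x0) /\
    (forall xs : nat -> X, norming_sequence T xs -> in_closed_span xs x0).
Proof.
intros T_smooth [x0 x0_M]. exists x0.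
split; [exact (proj1 x0_M) |].
split; [exact (norm_attainment_set X Y T T_smooth x0 x0_M) |].
split; [exact (smooth_image_of_norm_attained X Y T T_smooth x0 x0_M) |].
exact (in_closed_span_of_norming X Y T T_smooth x0 x0_M).
Qed.
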